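(* Let $A\in\mathbb{C}^{d\times d}$ be Hermitian positive-definite and let $M\in\mathbb{R}^{d\times d}$ be diagonal with positive diagonal entries. Let $\lambda_0>0$ be the smallest eigenvalue of the generalized eigenvalue problem $Az=\lambda Mz$. For $\lambda>0$ consider the energy $e:\mathbb{C}^d\to\mathbb{R}$, $$e(z)=\tfrac12\langle Az,z\rangle+\tfrac{\lambda}{4}\langle Mu,u\rangle,\qquad u_i=1-|z_i|^2\ (i=1,\dots,d),$$ where $\langle x,y\rangle=\mathrm{Re}\,(x^\dagger y)$. If $0<\lambda\le\lambda_0$, then the only critical point of $e$ (viewing $\mathbb{C}^d\cong\mathbb{R}^{2d}$) is $z=0$.
   Context: $x^\dagger$ denotes the conjugate transpose. Critical points are points where the gradient of $e$ with respect to the real and imaginary parts of $z$ vanishes. *)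

From HB Require Import structures.
From mathcomp Require Import all_boot all_order all_algebra.
From mathcomp Require Import all_classical all_reals.
From mathcomp Require Import topology normedtype derive.
From mathcomp Require Import complex.
Set Implicit Arguments. Unset Strict Implicit. Unset Printing Implicit Defensive.
Import Order.TTheory GRing.Theory Num.Theory.
Local Open Scope ring_scope.

Section Defs.
Variable R : realType.
Variable d : nat.

Definition cadj m n (A : 'M[R[i]]_(m, n)) : 'M[R[i]]_(n, m) :=
  (map_mx (@conjc R) A)^T.

Definition cinner (x y : 'cV[R[i]]_d) : R := complex.Re ((cadj x *m y) 0 0).

Definition rinner (x y : 'cV[R]_d) : R := (x^T *m y) 0 0.

Definition hermitian_mx_c (A : 'M[R[i]]_d) : Prop := cadj A = A.

Definition posdef_c (A : 'M[R[i]]_d) : Prop :=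
  forall z : 'cV[R[i]]_d, z != 0 -> 0 < cinner z (A *m z).

Definition cmx (M : 'M[R]_d) : 'M[R[i]]_d := map_mx (fun x => x%:C%C) M.

Definition gen_eigenvalue (A : 'M[R[i]]_d) (M : 'M[R]_d) (mu : R[i]) : Prop :=
  exists z : 'cV[R[i]]_d, z != 0 /\ A *m z = mu *: (cmx M *m z).

Definition csqnorm (c : R[i]) : R := complex.Re c ^+ 2 + complex.Im c ^+ 2.

Definition energy (A : 'M[R[i]]_d) (M : 'M[R]_d) (lam : R)
    (z : 'cV[R[i]]_d) : R :=
  let u : 'cV[R]_d := \col_i (1 - csqnorm (z i 0)) in
  2^-1 * cinner (A *m z) z + lam / 4 * rinner (M *m u) u.

(* z is a critical point of f : C^d -> R, viewing C^d = R^(2d): all partial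
   derivatives w.r.t. Re z_j and Im z_j exist and vanish. *)
Definition critical_point (f : 'cV[R[i]]_d -> R) (z : 'cV[R[i]]_d) : Prop :=
  forall j : 'I_d,
    is_derive (0 : R^o) (1 : R^o)
      (fun t : R^o => (f (z + (Complex t 0) *: delta_mx j 0) : R^o)) (0 : R^o) /\
    is_derive (0 : R^o) (1 : R^o)
      (fun t : R^o => (f (z + (Complex 0 t) *: delta_mx j 0) : R^o)) (0 : R^o).

End Defs.

From HB Require Import structures.
From mathcomp Require Import all_boot all_order all_algebra.
From mathcomp Require Import all_classical all_reals.
From mathcomp Require Import topology normedtype derive.
From mathcomp Require Import complex.
From mathcomp Require Import ring lra.
Set Implicit Arguments. Unset Strict Implicit. Unset Printing Implicit Defensive.
Import Order.TTheory GRing.Theory Num.Theory.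
Local Open Scope ring_scope.
Local Open Scope complex_scope.
Local Notation Re := complex.Re.
Local Notation Im := complex.Im.

(* A critical point satisfies [A z = lam M (1 - |z|^2) z] entrywise. Pairing with [z]
   gives [<z, A z> = lam (sum_j M_jj |z_j|^2 - sum_j M_jj |z_j|^4)], whereas the
   generalized Rayleigh bound [<z, A z> >= lam0 sum_j M_jj |z_j|^2], which comes from the
   spectral theorem applied to [M^(-1/2) A M^(-1/2)], gives
   [<z, A z> >= lam sum_j M_jj |z_j|^2]. Hence [sum_j M_jj |z_j|^4 <= 0] and [z = 0].
   The directional derivatives of the energy are read off from the fact that it is a
   quartic polynomial along every real line. *)

Section ComplexScalars.
Variable R : realType.
Implicit Types (x y : R[i]) (t : R).

Lemma Re_sum (I : Type) (r : seq I) (P : pred I) (F : I -> R[i]) :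
  Re (\sum_(i <- r | P i) F i) = \sum_(i <- r | P i) Re (F i).
Proof. exact: (raddf_sum (@Re R : Rcomplex R -> R)). Qed.

Lemma csqnorm_ge0 x : 0 <= csqnorm x.
Proof. by rewrite addr_ge0 ?sqr_ge0. Qed.

Lemma csqnorm_eq0 x : (csqnorm x == 0) = (x == 0).
Proof.
case: x => a b; rewrite /csqnorm eq_complex /=.
by rewrite paddr_eq0 ?sqr_ge0 // !sqrf_eq0.
Qed.

Lemma Re_conjcMC x y : Re (x^* * y) = Re (y^* * x).
Proof. by case: x y => [a b] [c e] /=; ring. Qed.

Lemma Re_conjc_realMl t x y : Re ((t%:C * x)^* * y) = t * Re (x^* * y).
Proof. by case: x y => [a b] [c e] /=; ring. Qed.

Lemma csqnorm_line x y t :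
  csqnorm (x + t%:C * y) = csqnorm x + 2 * Re (x^* * y) * t + csqnorm y * t ^+ 2.
Proof. by case: x y => [a b] [c e]; rewrite /csqnorm /=; ring. Qed.

Lemma Re_conjc_line x y z w t :
  Re ((x + t%:C * y)^* * (z + t%:C * w)) =
  Re (x^* * z) + (Re (x^* * w) + Re (y^* * z)) * t + Re (y^* * w) * t ^+ 2.
Proof. by case: x y z w => [? ?] [? ?] [? ?] [? ?] /=; ring. Qed.

Lemma real_complexMi t : t%:C * 'i = t*i.
Proof. by apply/eqP; rewrite eq_complex /= !mulr0 !mul0r mulr1 subr0 addr0 !eqxx. Qed.

Lemma Re_conjcMi x : Re (x^* * 'i) = Im x.
Proof. by case: x => a b /=; ring. Qed.

End ComplexScalars.

Section InnerProducts.
Variables (R : realType) (d : nat).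
Implicit Types (x y z w : 'cV[R[i]]_d).

Lemma cadj_mul m n p (X : 'M[R[i]]_(m, n)) (Y : 'M[R[i]]_(n, p)) :
  cadj (X *m Y) = cadj Y *m cadj X.
Proof. by rewrite /cadj map_mxM trmx_mul. Qed.

Lemma cinnerE x y : cinner x y = \sum_k Re ((x k 0)^* * y k 0).
Proof. by rewrite /cinner /cadj !mxE Re_sum; apply: eq_bigr => k _; rewrite !mxE. Qed.

Lemma cinnerC x y : cinner x y = cinner y x.
Proof. by rewrite !cinnerE; apply: eq_bigr => k _; apply: Re_conjcMC. Qed.

Lemma cinner0l y : cinner 0 y = 0.
Proof. by rewrite /cinner /cadj map_mx0 trmx0 mul0mx mxE. Qed.

Lemma cinnerBl x y w : cinner (x - y) w = cinner x w - cinner y w.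
Proof.
rewrite !cinnerE -sumrB; apply: eq_bigr => k _.
by rewrite !mxE rmorphB mulrBl raddfB.
Qed.

Lemma cinner_self x : cinner x x = \sum_k csqnorm (x k 0).
Proof.
rewrite cinnerE; apply: eq_bigr => k _.
by case: (x k 0) => a b; rewrite /csqnorm /=; ring.
Qed.

Lemma cinner_deltaZ x (c : R[i]) j : cinner x (c *: delta_mx j 0) = Re ((x j 0)^* * c).
Proof.
rewrite cinnerE (bigD1 j) //= big1 ?addr0; first by rewrite !mxE !eqxx mulr1.
by move=> k /negbTE kj; rewrite !mxE kj mulr0 mulr0.
Qed.

Lemma cinner_hermitian (A : 'M[R[i]]_d) z w :
  hermitian_mx_c A -> cinner (A *m w) z = cinner (A *m z) w.
Proof. by move=> hA; rewrite [RHS]cinnerC /cinner cadj_mul hA mulmxA. Qed.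

Lemma cinner_line (A : 'M[R[i]]_d) z w (t : R) :
  cinner (A *m (z + t%:C *: w)) (z + t%:C *: w) =
  cinner (A *m z) z + (cinner (A *m z) w + cinner (A *m w) z) * t
  + cinner (A *m w) w * t ^+ 2.
Proof.
rewrite mulmxDr -scalemxAr !cinnerE; move: (A *m z) (A *m w) => Az Aw.
under eq_bigr do rewrite !mxE Re_conjc_line mulrDl.
by rewrite !big_split /= -!mulr_suml mulrDl.
Qed.

Lemma rinner_diag (M : 'M[R]_d) (v : 'cV[R]_d) :
  is_diag_mx M -> rinner (M *m v) v = \sum_k M k k * v k 0 ^+ 2.
Proof.
move=> /is_diag_mxP dM; rewrite /rinner !mxE; apply: eq_bigr => k _.
rewrite !mxE (bigD1 k) //= big1 ?addr0 => [|l lk]; first by rewrite expr2 mulrA.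
by rewrite dM ?mul0r // eq_sym.
Qed.

End InnerProducts.

Lemma is_derive_unique (K : numFieldType) (V W : normedModType K) (f : V -> W)
    (a v : V) (df1 df2 : W) :
  is_derive a v f df1 -> is_derive a v f df2 -> df1 = df2.
Proof.
by move=> d1 d2; rewrite -(@derive_val _ _ _ _ _ _ _ d1) (@derive_val _ _ _ _ _ _ _ d2).
Qed.

Definition quad_poly (R : nzRingType) (a b c : R) : {poly R} := a%:P + b *: 'X + c *: 'X^2.

Lemma quad_polyE (R : comNzRingType) (a b c t : R) :
  (quad_poly a b c).[t] = a + b * t + c * t ^+ 2.
Proof. by rewrite /quad_poly !hornerE. Qed.

Lemma quad_poly_deriv0 (R : comNzRingType) (a b c : R) : (quad_poly a b c)^`().[0] = b.
Proof. by rewrite /quad_poly !(derivD, derivC, derivZ, derivX, derivXn) !hornerE; ring. Qed.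

Lemma quad_poly0 (R : comNzRingType) (a b c : R) : (quad_poly a b c).[0] = a.
Proof. by rewrite quad_polyE; ring. Qed.

Section EnergyGradient.
Variables (R : realType) (d : nat) (A : 'M[R[i]]_d) (M : 'M[R]_d) (lam : R).
Hypotheses (hA : hermitian_mx_c A) (dM : is_diag_mx M).
Implicit Types (z w : 'cV[R[i]]_d).

Definition energy_grad z : 'cV[R[i]]_d :=
  A *m z - \col_k ((lam * M k k * (1 - csqnorm (z k 0)))%:C * z k 0).

Lemma energy_grad0 : energy_grad 0 = 0.
Proof.
apply/matrixP => i j; rewrite !mxE big1 => [|k _]; last by rewrite mxE mulr0.
by rewrite mulr0 subrr.
Qed.

Lemma energy_grad_eq0_cinner z : energy_grad z = 0 ->
  cinner z (A *m z) =
  lam * (\sum_j M j j * csqnorm (z j 0) - \sum_j M j j * csqnorm (z j 0) ^+ 2).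
Proof.
move/eqP; rewrite subr_eq0 => /eqP ->; rewrite cinnerE -sumrB mulr_sumr.
apply: eq_bigr => j _; rewrite mxE.
by case: (z j 0) => a b; rewrite /csqnorm /=; ring.
Qed.

Let energy_line_poly z w : {poly R} :=
  2^-1 *: quad_poly (cinner (A *m z) z) (cinner (A *m z) w + cinner (A *m w) z)
                (cinner (A *m w) w)
  + (lam / 4) *: \sum_k M k k *:
      (quad_poly (1 - csqnorm (z k 0)) (- (2 * Re ((z k 0)^* * w k 0)))
             (- csqnorm (w k 0)) ^+ 2).

Lemma energy_line z w (t : R) :
  energy A M lam (z + Complex t 0 *: w) = (energy_line_poly z w).[t].
Proof.
rewrite complexr0 /energy rinner_diag // cinner_line /energy_line_poly.
rewrite hornerD !hornerZ quad_polyE horner_sum; congr (_ + _ * _).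
apply: eq_bigr => k _; rewrite hornerZ horner_exp quad_polyE !mxE csqnorm_line.
by congr (_ * _ ^+ 2); ring.
Qed.

Lemma energy_line_is_derive z w :
  is_derive (0 : R^o) (1 : R^o)
    (fun t : R^o => (energy A M lam (z + Complex t 0 *: w) : R^o))
    (cinner (energy_grad z) w).
Proof.
rewrite (funext (energy_line z w)); apply: is_derive_eq.
rewrite /energy_line_poly derivD !derivZ raddf_sum /= hornerD !hornerZ quad_poly_deriv0.
rewrite horner_sum.
under eq_bigr do
  rewrite derivZ hornerZ expr2 derivM hornerD !hornerM quad_poly0 quad_poly_deriv0.
rewrite cinnerBl (cinner_hermitian _ _ hA) [cinner (\col_k _) _]cinnerE.
under [X in _ = _ - X]eq_bigr do rewrite mxE Re_conjc_realMl.
rewrite mulr_sumr -sumrN; congr (_ + _); first by field.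
by apply: eq_bigr => k _; field.
Qed.

Lemma critical_pointP z :
  critical_point (energy A M lam) z <-> energy_grad z = 0.
Proof.
have real_line j := energy_line_is_derive z (delta_mx j 0).
have imag_line j : is_derive (0 : R^o) (1 : R^o)
    (fun t : R^o => (energy A M lam (z + t*i *: delta_mx j 0) : R^o))
    (cinner (energy_grad z) ('i *: delta_mx j 0)).
  have -> : (fun t : R^o => (energy A M lam (z + t*i *: delta_mx j 0) : R^o))
      = (fun t : R^o => (energy A M lam (z + Complex t 0 *: ('i *: delta_mx j 0)) : R^o)).
    by apply/funext => t; rewrite scalerA complexr0 real_complexMi.
  exact: energy_line_is_derive.
split=> [crit | g0 j]; last first.
  by split; [move: (real_line j) | move: (imag_line j)]; rewrite g0 cinner0l.
(* Along [e_j] and [i e_j] the derivative is [Re] resp. [Im] of the [j]-th entry of the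
   gradient. *)
apply/matrixP => j k; rewrite ord1 [RHS]mxE.
have [dre dim] := crit j.
have re0 := is_derive_unique dre (real_line j).
have im0 := is_derive_unique dim (imag_line j).
rewrite -[delta_mx j 0]scale1r cinner_deltaZ mulr1 in re0.
rewrite cinner_deltaZ Re_conjcMi in im0.
by case: (energy_grad z j 0) re0 im0 => a b /= <- <-.
Qed.

End EnergyGradient.

Section HermitianRayleigh.
Variables (R : realType) (d : nat) (B : 'M[R[i]]_d).
Hypothesis hB : hermitian_mx_c B.

Let P := spectralmx B.
Let sp := spectral_diag B.

Lemma hermitian_mx_c_hermsymmx : B \is hermsymmx.
Proof.
apply/is_hermitianmxP; rewrite expr0 scale1r.
by rewrite -[LHS]hB /cadj map_trmx.
Qed.

Lemma cadj_spectralmx : cadj P = invmx P.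
Proof. by rewrite invmx_unitary ?spectral_unitarymx // /cadj map_trmx. Qed.

Lemma hermitian_spectral_decomp : B = cadj P *m diag_mx sp *m P.
Proof.
rewrite cadj_spectralmx.
exact/orthomx_spectralP/hermitian_normalmx/hermitian_mx_c_hermsymmx.
Qed.

Lemma spectral_diag_realE k : (Re (sp 0 k))%:C = sp 0 k.
Proof.
apply: RRe_real.
by have /mxOverP := hermitian_spectral_diag_real hermitian_mx_c_hermsymmx; apply.
Qed.

Lemma spectral_diag_eigenvector k (v : 'cV[R[i]]_d := invmx P *m delta_mx k 0) :
  v != 0 /\ B *m v = sp 0 k *: v.
Proof.
have Punit : P \in unitmx := spectral_unit B.
split.
  apply/eqP => /(congr1 (mulmx P)); rewrite mulmx0 /v mulmxA mulmxV // mul1mx.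
  by move/matrixP/(_ k 0); rewrite !mxE !eqxx => /eqP; rewrite oner_eq0.
rewrite /v {1}hermitian_spectral_decomp -!mulmxA [P *m _]mulmxA mulmxV // mul1mx.
rewrite cadj_spectralmx scalemxAr; congr (_ *m _).
apply/matrixP => i j; rewrite mul_diag_mx !mxE ord1.
by case: eqP => [->|_]; rewrite ?mulr1 ?mulr0.
Qed.

Lemma hermitian_cinner_ge (lb : R) :
  (forall k, lb <= Re (sp 0 k)) ->
  forall y : 'cV[R[i]]_d, lb * cinner y y <= cinner y (B *m y).
Proof.
move=> lb_le y; set q := P *m y.
have PP : cadj P *m P = 1%:M by rewrite cadj_spectralmx mulVmx ?spectral_unit.
have yy : cinner y y = cinner q q.
  by rewrite /cinner /q cadj_mul -mulmxA [cadj P *m _]mulmxA PP mul1mx.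
have yBy : cinner y (B *m y) = \sum_k Re (sp 0 k) * csqnorm (q k 0).
  rewrite /cinner (_ : _ *m (B *m y) = cadj q *m (diag_mx sp *m q)); last first.
    by rewrite {1}hermitian_spectral_decomp /q cadj_mul !mulmxA.
  rewrite -/(cinner q _) cinnerE; clearbody q; apply: eq_bigr => k _.
  rewrite mul_diag_mx mxE -spectral_diag_realE.
  by case: (q k 0) => a b; rewrite /csqnorm /=; ring.
rewrite yy yBy cinner_self mulr_sumr; apply: ler_sum => k _.
by rewrite ler_wpM2r ?csqnorm_ge0.
Qed.

End HermitianRayleigh.

Section GeneralizedRayleigh.
Variables (R : realType) (d : nat) (A : 'M[R[i]]_d) (M : 'M[R]_d) (lam0 : R).
Hypotheses (hA : hermitian_mx_c A) (dM : is_diag_mx M) (M_gt0 : forall i, 0 < M i i).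
Hypothesis lam0_le : forall mu : R, gen_eigenvalue A M mu%:C -> lam0 <= mu.

Let s j := Num.sqrt (M j j).
Let s_neq0 j : s j != 0. Proof. by rewrite sqrtr_eq0 -ltNge. Qed.
Let s_sq j : s j ^+ 2 = M j j. Proof. by rewrite sqr_sqrtr // ltW. Qed.

Let sqrtM : 'M[R[i]]_d := diag_mx (\row_j (s j)%:C).
Let invsqrtM : 'M[R[i]]_d := diag_mx (\row_j (s j)^-1%:C).

Let diag_real_mulmx (a b : 'I_d -> R) :
  diag_mx (\row_j (a j)%:C) *m diag_mx (\row_j (b j)%:C) = diag_mx (\row_j (a j * b j)%:C).
Proof. by rewrite mulmx_diag; congr diag_mx; apply/rowP => j; rewrite !mxE rmorphM. Qed.

Let diag_real1 : diag_mx (\row_j (1 : R)%:C) = 1%:M :> 'M[R[i]]_d.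
Proof. by apply/matrixP => i j; rewrite !mxE. Qed.

Lemma invsqrtMK : invsqrtM *m sqrtM = 1%:M.
Proof.
rewrite diag_real_mulmx -diag_real1; congr diag_mx.
by apply/rowP => j; rewrite !mxE mulVf.
Qed.

Lemma sqrtMK : sqrtM *m invsqrtM = 1%:M.
Proof.
rewrite diag_real_mulmx -diag_real1; congr diag_mx.
by apply/rowP => j; rewrite !mxE mulfV.
Qed.

Lemma cmxM_invsqrtM : cmx M *m invsqrtM = sqrtM.
Proof.
have -> : cmx M = diag_mx (\row_j (s j * s j)%:C).
  apply/matrixP => i j; rewrite !mxE -expr2 s_sq.
  by case: eqP => [->|/eqP ij]; rewrite ?mulr1n // (elimT is_diag_mxP dM i j ij) mulr0n.
by rewrite diag_real_mulmx; congr diag_mx; apply/rowP => j; rewrite !mxE mulfK.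
Qed.

Lemma cadj_invsqrtM : cadj invsqrtM = invsqrtM.
Proof.
apply/matrixP => i j; rewrite !mxE eq_sym.
by case: eqP => [->|_]; rewrite ?mulr1n ?mulr0n //= oppr0.
Qed.

(* [B v = mu v] iff [A (invsqrtM v) = mu M (invsqrtM v)]. *)
Let B := invsqrtM *m A *m invsqrtM.

Lemma hermitian_congruence : hermitian_mx_c B.
Proof. by rewrite /hermitian_mx_c /B !cadj_mul cadj_invsqrtM hA mulmxA. Qed.

Lemma congruence_spectral_ge k : lam0 <= Re (spectral_diag B 0 k).
Proof.
have [v_neq0 Bv] := spectral_diag_eigenvector hermitian_congruence k.
move: (invmx _ *m _) v_neq0 Bv => v v_neq0 Bv.
apply: lam0_le; exists (invsqrtM *m v); split.
  apply: contraNneq v_neq0 => /(congr1 (mulmx sqrtM)).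
  by rewrite mulmx0 mulmxA sqrtMK mul1mx => ->.
rewrite (spectral_diag_realE hermitian_congruence) [X in _ = _ *: X]mulmxA cmxM_invsqrtM.
by rewrite scalemxAr -Bv /B !mulmxA sqrtMK mul1mx.
Qed.

Lemma generalized_rayleigh (z : 'cV[R[i]]_d) :
  lam0 * \sum_j M j j * csqnorm (z j 0) <= cinner z (A *m z).
Proof.
set y := sqrtM *m z.
have zE : z = invsqrtM *m y by rewrite /y mulmxA invsqrtMK mul1mx.
have -> : cinner z (A *m z) = cinner y (B *m y).
  by rewrite /cinner {1}zE cadj_mul cadj_invsqrtM /B zE !mulmxA.
have -> : \sum_j M j j * csqnorm (z j 0) = cinner y y.
  rewrite cinner_self; apply: eq_bigr => j _; rewrite /y mul_diag_mx !mxE -s_sq.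
  by case: (z j 0) => a b; rewrite /csqnorm /=; ring.
exact/hermitian_cinner_ge/congruence_spectral_ge/hermitian_congruence.
Qed.

End GeneralizedRayleigh.

Lemma weighted_quartic_le0_eq0 (R : realType) (d : nat) (c : 'I_d -> R) (z : 'cV[R[i]]_d) :
  (forall j, 0 < c j) -> \sum_j c j * csqnorm (z j 0) ^+ 2 <= 0 -> z = 0.
Proof.
move=> c_gt0 S_le0.
have term_ge0 j : 0 <= c j * csqnorm (z j 0) ^+ 2 by rewrite mulr_ge0 ?sqr_ge0 // ltW.
have /psumr_eq0P S_eq0 : \sum_j c j * csqnorm (z j 0) ^+ 2 = 0.
  by apply/eqP; rewrite eq_le S_le0 sumr_ge0.
apply/matrixP => j k; rewrite ord1 mxE; apply/eqP.
have /eqP := S_eq0 (fun j _ => term_ge0 j) j isT.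
by rewrite mulf_eq0 gt_eqF //= sqrf_eq0 csqnorm_eq0.
Qed.

Theorem lemmaC1 (R : realType) (d : nat) (A : 'M[R[i]]_d) (M : 'M[R]_d)
    (lam0 lam : R) :
  hermitian_mx_c A -> posdef_c A ->
  is_diag_mx M -> (forall i : 'I_d, 0 < M i i) ->
  0 < lam0 ->
  gen_eigenvalue A M (lam0%:C)%C ->
  (forall mu : R, gen_eigenvalue A M (mu%:C)%C -> lam0 <= mu) ->
  0 < lam -> lam <= lam0 ->
  critical_point (energy A M lam) 0 /\
  (forall z : 'cV[R[i]]_d, critical_point (energy A M lam) z -> z = 0).
Proof.
move=> hA _ dM M_gt0 _ _ lam0_min lam_gt0 lam_le.
split=> [|z]; rewrite critical_pointP //; first exact: energy_grad0.
move=> /energy_grad_eq0_cinner Ez.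
have := generalized_rayleigh hA dM M_gt0 lam0_min z; rewrite Ez => ray.
apply: (weighted_quartic_le0_eq0 M_gt0); rewrite -(pmulr_rle0 _ lam_gt0).
have S2_ge0 : 0 <= \sum_j M j j * csqnorm (z j 0).
  by apply: sumr_ge0 => j _; rewrite mulr_ge0 ?csqnorm_ge0 // ltW.
move: ray S2_ge0.
move: (\sum_j M j j * csqnorm (z j 0)) (\sum_j M j j * csqnorm (z j 0) ^+ 2) => S2 S4.
nra.
Qed.
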